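(* Let $\mathcal{C}$ be a permutation class with $p$-basis $\mathcal{B}$, let $\mathcal{M}=\{M_{\tau,top}:\tau\in\mathcal{B}\}$, and let $c_n$ be the number of permutations of size $n$ in $\mathcal{C}$. Then the permutation class $Av_{\mathfrak{S}}(\mathcal{M})$ is enumerated by the sequence $(n\cdot c_{n-1})_n$, i.e. it contains exactly $n\,c_{n-1}$ permutations of size $n$. The same holds when $M_{\tau,top}$ is replaced by $M_{\tau,bottom}$, $M_{\tau,right}$ or $M_{\tau,left}$.
   Context: A permutation $\sigma$ of $\{1,\dots,n\}$ (size $n$) is identified with its permutation matrix ($M_\sigma(i,j)=1$ iff $i=\sigma(j)$, rows numbered bottom to top). A matrix is a submatrix of another if obtained by deleting rows and/or columns; the pattern order on permutations is this order restricted to permutation matrices, and a permutation class is a set closed downward for it. The $p$-basis of $\mathcal{C}$ is the set of permutations not in $\mathcal{C}$ that are minimal for the pattern order among those not in $\mathcal{C}$. For a permutation $\tau$, $M_{\tau,top}$ (resp. $M_{\tau,bottom}$) is the matrix obtained by adding a row of $0$'s above (resp. below) the permutation matrix of $\tau$, and $M_{\tau,right}$ (resp. $M_{\tau,left}$) by adding a column of $0$'s to its right (resp. left). $Av_{\mathfrak{S}}(\mathcal{M})$ is the set of permutations with no submatrix in $\mathcal{M}$. The count $c_0$ refers to the empty permutation (so $c_0=1$ when $n=1$ is considered). *)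

From mathcomp Require Import all_boot all_fingroup matrix.
From mathcomp Require Import boolp.
Set Implicit Arguments. Unset Strict Implicit. Unset Printing Implicit Defensive.

(* 0/1 matrices are 'M[bool]_(r, c).  Row index 0 is the BOTTOM row
   (rows numbered bottom to top, as in the paper), column 0 the leftmost. *)

Definition submx_of (r c r' c' : nat) (A : 'M[bool]_(r, c)) (B : 'M[bool]_(r', c')) : Prop :=
  exists (f : 'I_r -> 'I_r') (g : 'I_c -> 'I_c'),
    (forall i i' : 'I_r, i < i' -> f i < f i') /\
    (forall j j' : 'I_c, j < j' -> g j < g j') /\
    (forall i j, A i j = B (f i) (g j)).

Definition pmx (n : nat) (s : 'S_n) : 'M[bool]_(n, n) :=
  \matrix_(i, j) (i == s j).

Definition pattern (m n : nat) (s : 'S_m) (t : 'S_n) : Prop := submx_of (pmx s) (pmx t).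

Definition perm_class (C : forall n, 'S_n -> Prop) : Prop :=
  forall m n (s : 'S_m) (t : 'S_n), pattern s t -> C n t -> C m s.

Definition in_pbasis (C : forall n, 'S_n -> Prop) (m : nat) (t : 'S_m) : Prop :=
  ~ C m t /\
  forall k (u : 'S_k), pattern u t -> ~ C k u ->
    existT (fun k => 'S_k) k u = existT (fun k => 'S_k) m t.

(* M_{tau,top}: a row of zeros added above (new top row, index n) *)
Definition Mtop (n : nat) (t : 'S_n) : 'M[bool]_(n.+1, n) :=
  \matrix_(i, j) (nat_of_ord i == nat_of_ord (t j)).
(* M_{tau,bottom}: a row of zeros added below (new row index 0) *)
Definition Mbottom (n : nat) (t : 'S_n) : 'M[bool]_(n.+1, n) :=
  \matrix_(i, j) (nat_of_ord i == (t j).+1).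
(* M_{tau,right}: a column of zeros added on the right (new column index n) *)
Definition Mright (n : nat) (t : 'S_n) : 'M[bool]_(n, n.+1) :=
  \matrix_(i, j) [exists j' : 'I_n, (nat_of_ord j' == nat_of_ord j) && (i == t j')].
(* M_{tau,left}: a column of zeros added on the left (new column index 0) *)
Definition Mleft (n : nat) (t : 'S_n) : 'M[bool]_(n, n.+1) :=
  \matrix_(i, j) [exists j' : 'I_n, ((nat_of_ord j').+1 == nat_of_ord j) && (i == t j')].

Inductive side := Top | Bottom | Right | Left.

Definition contains_ext (sd : side) (k : nat) (t : 'S_k) (n : nat) (s : 'S_n) : Prop :=
  match sd with
  | Top => submx_of (Mtop t) (pmx s)
  | Bottom => submx_of (Mbottom t) (pmx s)
  | Right => submx_of (Mright t) (pmx s)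
  | Left => submx_of (Mleft t) (pmx s)
  end.

Definition Av_ext (C : forall n, 'S_n -> Prop) (sd : side) (n : nat) (s : 'S_n) : Prop :=
  forall k (t : 'S_k), in_pbasis C t -> ~ contains_ext sd t s.

Definition num_of_size (P : forall n, 'S_n -> Prop) (n : nat) : nat :=
  #|[set s : 'S_n | `[< P n s >] ]|.

(* An occurrence of M_{tau,top} in sigma is the same thing as an occurrence of
   tau that avoids the top row of sigma: the inserted zero row can always be
   moved up to the top row, whose only 1 then lies in a column the occurrence
   does not use.  Hence sigma avoids every M_{tau,top}, tau in the p-basis, iff
   sigma with its topmost point deleted avoids the p-basis, i.e. lies in C.
   Recording the column of that point, sigma |-> (column, sigma minus the point)
   is a bijection S_n -> [n] x S_(n-1), which gives n * c_(n-1).  For the other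
   sides delete the bottommost, rightmost or leftmost point instead (for the
   latter two, recording its row). *)

From mathcomp Require Import all_boot all_fingroup matrix.
From mathcomp Require Import boolp zify.
Set Implicit Arguments. Unset Strict Implicit. Unset Printing Implicit Defensive.

Definition occurs r c r' c' (A : 'M[bool]_(r, c)) (B : 'M[bool]_(r', c'))
    (f : 'I_r -> 'I_r') (g : 'I_c -> 'I_c') : Prop :=
  [/\ {homo f : i i' / i < i'}, {homo g : j j' / j < j'} &
      forall i j, A i j = B (f i) (g j)].

Lemma submx_ofE r c r' c' (A : 'M[bool]_(r, c)) (B : 'M[bool]_(r', c')) :
  submx_of A B <-> exists f g, occurs A B f g.
Proof.
by split=> [[f [g [Hf [Hg E]]]]|[f [g [Hf Hg E]]]]; exists f, g.
Qed.

Section Increasing.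
Variables (a b : nat) (f : 'I_a -> 'I_b).
Hypothesis f_incr : {homo f : i j / i < j}.

Lemma incr_mono : {mono f : i j / i < j}.
Proof.
move=> i j; case: (ltngtP i j) => [/f_incr //|/f_incr lt_ji|/val_inj ->].
  by apply/negbTE; rewrite -leqNgt ltnW.
by rewrite ltnn.
Qed.

Lemma incr_inj : injective f.
Proof.
move=> i j fij.
by case: (ltngtP i j) => [/f_incr|/f_incr|/val_inj //]; rewrite fij ltnn.
Qed.

Lemma incr_ge (i : 'I_a) : i <= f i.
Proof.
have [n] := ubnP i; elim: n i => // n IHn i /ltnSE le_in.
case: (posnP i) => [->//|i_gt0].
have lt_pred : i.-1 < a by rewrite (leq_ltn_trans (leq_pred _)).
have lt_i : Ordinal lt_pred < i by rewrite /= prednK.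
have := IHn (Ordinal lt_pred); rewrite /= -ltnS prednK // => /(_ le_in) le_pred.
by rewrite -(prednK i_gt0) (leq_ltn_trans le_pred (f_incr lt_i)).
Qed.
End Increasing.

Lemma incr_id a (f : 'I_a -> 'I_a) : {homo f : i j / i < j} -> f =1 id.
Proof.
move=> f_incr i; have f_inj := incr_inj f_incr.
have finv_incr : {homo invF f_inj : x y / x < y}.
  by move=> x y; rewrite -(incr_mono f_incr (invF f_inj x)) !f_invF.
apply/val_inj/eqP; rewrite eqn_leq (incr_ge f_incr) andbT.
by rewrite -{2}(invF_f f_inj i) (incr_ge finv_incr).
Qed.

Lemma occurs_tr r c r' c' (A : 'M[bool]_(r, c)) (B : 'M[bool]_(r', c')) f g :
  occurs A^T B^T g f <-> occurs A B f g.
Proof.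
by split=> -[Hg Hf E]; split=> // i j;
  [move: (E j i); rewrite !mxE | rewrite !mxE E].
Qed.

Lemma submx_of_tr r c r' c' (A : 'M[bool]_(r, c)) (B : 'M[bool]_(c', r')) :
  submx_of A^T B <-> submx_of A B^T.
Proof.
rewrite !submx_ofE -{1}[B]trmxK.
by split=> -[f [g /occurs_tr occ]]; exists g, f.
Qed.

Lemma pmxE n (s : 'S_n) i j : pmx s i j = (i == s j).
Proof. exact: mxE. Qed.

Lemma tr_pmx n (s : 'S_n) : (pmx s)^T%R = pmx s^-1%g.
Proof.
by apply/matrixP => i j; rewrite !mxE eq_sym (canF_eq (permK s)).
Qed.

Lemma pattern_refl n (s : 'S_n) : pattern s s.
Proof. by exists id, id. Qed.

Lemma pattern_trans a b c (s : 'S_a) (t : 'S_b) (u : 'S_c) :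
  pattern s t -> pattern t u -> pattern s u.
Proof.
move=> [f [g [Hf [Hg E]]]] [f' [g' [Hf' [Hg' E']]]].
exists (f' \o f), (g' \o g); split; first by move=> i i' /Hf /Hf'.
by split=> [j j' /Hg /Hg' //|i j]; rewrite E E'.
Qed.

Lemma pattern_size a b (s : 'S_a) (t : 'S_b) : pattern s t -> a <= b.
Proof.
move=> [f [_ [f_incr _]]].
by have := leq_card f (incr_inj f_incr); rewrite !card_ord.
Qed.

Lemma pattern_same_size a (s t : 'S_a) : pattern s t -> s = t.
Proof.
move=> [f [g [/incr_id Ef [/incr_id Eg E]]]]; apply/permP => j.
by move: (E (s j) j); rewrite Ef Eg !pmxE eqxx => /esym/eqP.
Qed.

Lemma occurs_pmx_avoid k n (t : 'S_k) (s : 'S_n) f g v :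
  occurs (pmx t) (pmx s) f g ->
  (forall i, f i != v) <-> (forall j, g j != (s^-1)%g v).
Proof.
move=> [_ _ E]; split=> avoid x; apply/eqP => x_v.
  move: (avoid (t x)) (E (t x) x).
  by rewrite !pmxE eqxx x_v permKV => /negbTE ->.
move: (avoid ((t^-1)%g x)) (E x ((t^-1)%g x)).
by rewrite !pmxE permKV eqxx x_v (eq_sym v) (canF_eq (permK s)) => /negbTE ->.
Qed.

Lemma mem_class_pbasis (C : forall n, 'S_n -> Prop) (HC : perm_class C)
    m (s : 'S_m) :
  C m s <-> forall k (t : 'S_k), in_pbasis C t -> ~ pattern t s.
Proof.
split=> [Cs k t [notCt _] /HC/(_ Cs) //|avoid]; apply: contrapT => notCs.
have ex_bad : exists k, `[< exists u : 'S_k, pattern u s /\ ~ C k u >].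
  by exists m; apply/asboolP; exists s; split => //; exact: pattern_refl.
case: (ex_minnP ex_bad) => k /asboolP [u [us notCu]] k_min.
apply: (avoid k u) => //; split => // k' u' u'u notCu'.
have le_kk' : k <= k'.
  by apply/k_min/asboolP; exists u'; split => //; exact: pattern_trans u'u us.
have /eqP ek : k' == k by rewrite eqn_leq le_kk' (pattern_size u'u).
by subst k'; rewrite (pattern_same_size u'u).
Qed.

Lemma ltn_lift n (h : 'I_n) (i j : 'I_n.-1) : (lift h i < lift h j) = (i < j).
Proof. by rewrite /= !ltnNge leq_bump2. Qed.

Section PermDelete.
Variables (m : nat) (s : 'S_m.+1) (j0 : 'I_m.+1).

Definition perm_delete_fun (x : 'I_m) : 'I_m :=
  odflt x (unlift (s j0) (s (lift j0 x))).

Lemma lift_perm_delete_fun x : lift (s j0) (perm_delete_fun x) = s (lift j0 x).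
Proof.
have : s j0 != s (lift j0 x) by rewrite (inj_eq perm_inj) neq_lift.
by case/unlift_some => y Ey Hu; rewrite /perm_delete_fun Hu.
Qed.

Lemma perm_delete_fun_inj : injective perm_delete_fun.
Proof.
move=> x y Exy; apply: (@lift_inj _ j0); apply: (@perm_inj _ s).
by rewrite -!lift_perm_delete_fun Exy.
Qed.

Definition perm_delete : 'S_m := perm perm_delete_fun_inj.

Lemma lift_perm_delete x : lift (s j0) (perm_delete x) = s (lift j0 x).
Proof. by rewrite permE lift_perm_delete_fun. Qed.

Lemma perm_deleteK : lift_perm j0 (s j0) perm_delete = s.
Proof.
apply/permP => x; case: (unliftP j0 x) => [y ->|->].
  by rewrite lift_perm_lift lift_perm_delete.
by rewrite lift_perm_id.
Qed.

End PermDelete.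

Lemma lift_factor a n (h : 'I_n.+1) (f : 'I_a -> 'I_n.+1) :
  (forall i, f i != h) -> exists f' : 'I_a -> 'I_n, forall i, lift h (f' i) = f i.
Proof.
move=> avoid; have avoid' i : h != f i by rewrite eq_sym avoid.
by exists (fun i => sval (unlift_some (avoid' i))) => i; case: unlift_some.
Qed.

Lemma pattern_delete k m (t : 'S_k) (s : 'S_m.+1) j0 :
  pattern t (perm_delete s j0) <->
  exists f g, occurs (pmx t) (pmx s) f g /\ forall j, g j != j0.
Proof.
rewrite /pattern submx_ofE.
split=> [[f [g [f_incr g_incr E]]]|[f [g [occ avoid]]]].
  exists (lift (s j0) \o f), (lift j0 \o g).
  split=> [|j]; last by rewrite eq_sym neq_lift.
  split=> [i i'|j j'|i j]; rewrite /= ?ltn_lift; [exact: f_incr|exact: g_incr|].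
  by rewrite E !pmxE -lift_perm_delete (inj_eq lift_inj).
have f_avoid : forall i, f i != s j0.
  by apply/(occurs_pmx_avoid _ occ) => j; rewrite permK.
have [f' Ef] := lift_factor f_avoid.
have [g' Eg] := lift_factor avoid.
case: occ => f_incr g_incr E; exists f', g'; split.
- by move=> i i' /f_incr; rewrite -!Ef ltn_lift.
- by move=> j j' /g_incr; rewrite -!Eg ltn_lift.
- by move=> i j; rewrite E -Ef -Eg !pmxE -lift_perm_delete (inj_eq lift_inj).
Qed.

Definition insrow r c (e : 'I_r.+1) (A : 'M[bool]_(r, c)) : 'M[bool]_(r.+1, c) :=
  \matrix_(i, j) if unlift e i is Some i' then A i' j else false.

(* [v] is the row of [B] that receives the inserted zero row. *)
Lemma submx_insrow r c r' c' (e : 'I_r.+1) (A : 'M[bool]_(r, c))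
    (B : 'M[bool]_(r', c')) :
  submx_of (insrow e A) B <->
  exists f g (v : 'I_r'), [/\ occurs A B f g,
    forall i, (f i < v) = (lift e i < e) /\ (v < f i) = (e < lift e i) &
    forall j, ~~ B v (g j)].
Proof.
rewrite submx_ofE.
split=> [[F [G [F_incr G_incr E]]]|[f [g [v [[f_incr g_incr E] f_v Bv]]]]].
  exists (F \o lift e), G, (F e); split=> [|i|j] /=.
  - split=> // [i i' | i j]; first by rewrite -(ltn_lift e) => /F_incr.
    by rewrite -E mxE liftK.
  - by rewrite !(incr_mono F_incr).
  - by rewrite -E mxE unlift_none.
pose F i := if unlift e i is Some i' then f i' else v.
have F_mono : {mono F : i i' / i < i'}.
  move=> i i'; rewrite /F.
  case: (unliftP e i) => [a ->|->]; case: (unliftP e i') => [b ->|->].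
  - by rewrite ltn_lift (incr_mono f_incr).
  - by case: (f_v a).
  - by case: (f_v b).
  - by rewrite !ltnn.
exists F, g; split=> // [i i' | i j]; first by rewrite F_mono.
rewrite mxE /F; case: unliftP => [a _|_]; first exact: E.
by rewrite (negbTE (Bv j)).
Qed.

Definition ord_extreme n (hi : bool) : 'I_n.+1 := if hi then ord_max else ord0.

Lemma ltn_extreme n hi (x : 'I_n.+1) : x != ord_extreme n hi ->
  (x < ord_extreme n hi) = hi /\ (ord_extreme n hi < x) = ~~ hi.
Proof.
by case: hi; rewrite -val_eqE /= => x_e; have := ltn_ord x; split; lia.
Qed.

Lemma lift_extreme n hi (i : 'I_n) :
  (lift (ord_extreme n hi) i < ord_extreme n hi) = hi /\
  (ord_extreme n hi < lift (ord_extreme n hi) i) = ~~ hi.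
Proof. by apply: ltn_extreme; rewrite eq_sym neq_lift. Qed.

Lemma submx_insrow_extreme hi k m (t : 'S_k) (s : 'S_m.+1) :
  submx_of (insrow (ord_extreme k hi) (pmx t)) (pmx s) <->
  exists f g, occurs (pmx t) (pmx s) f g /\ forall i, f i != ord_extreme m hi.
Proof.
rewrite submx_insrow; split=> [[f [g [v [occ f_v _]]]]|[f [g [occ avoid]]]].
  exists f, g; split=> // i; apply/eqP => fi_e.
  move: (f_v i); rewrite fi_e; have [-> ->] := lift_extreme hi i.
  have [->|/ltn_extreme [-> ->]] := eqVneq v (ord_extreme m hi).
    by rewrite ltnn; case: (hi) => -[].
  by case: (hi) => -[].
exists f, g, (ord_extreme m hi); split=> // [i|j].
  by have [-> ->] := ltn_extreme (avoid i); have [-> ->] := lift_extreme hi i.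
have := (occurs_pmx_avoid _ occ).1 avoid j.
by rewrite pmxE (eq_sym (ord_extreme m hi)) (canF_eq (permK s)).
Qed.

Lemma submx_inscol_extreme hi k m (t : 'S_k) (s : 'S_m.+1) :
  submx_of (insrow (ord_extreme k hi) (pmx t)^T)^T (pmx s) <->
  exists f g, occurs (pmx t) (pmx s) f g /\ forall j, g j != ord_extreme m hi.
Proof.
rewrite submx_of_tr !tr_pmx submx_insrow_extreme -!tr_pmx.
by split=> -[f [g [/occurs_tr occ avoid]]]; exists g, f.
Qed.

Lemma Mtop_insrow k (t : 'S_k) : Mtop t = insrow (ord_extreme k true) (pmx t).
Proof.
apply/matrixP => i j; rewrite !mxE; case: unliftP => [a ->|->].
  by rewrite lift_max mxE.
by apply/negbTE; rewrite neq_ltn ltn_ord orbT.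
Qed.

Lemma Mbottom_insrow k (t : 'S_k) :
  Mbottom t = insrow (ord_extreme k false) (pmx t).
Proof.
by apply/matrixP => i j; rewrite !mxE; case: unliftP => [a ->|->]; rewrite ?mxE.
Qed.

Lemma Mright_insrow k (t : 'S_k) :
  Mright t = (insrow (ord_extreme k true) (pmx t)^T)^T%R.
Proof.
apply/matrixP => i j; rewrite !mxE; case: unliftP => [a ->|->]; rewrite ?mxE.
  apply/existsP/idP => [[j' /andP [/eqP E H]]|H].
    by rewrite lift_max in E; rewrite -(val_inj E).
  by exists a; rewrite lift_max eqxx.
by apply/existsP => [[j' /andP [/eqP E _]]]; move: (ltn_ord j'); rewrite E ltnn.
Qed.

Lemma Mleft_insrow k (t : 'S_k) :
  Mleft t = (insrow (ord_extreme k false) (pmx t)^T)^T%R.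
Proof.
apply/matrixP => i j; rewrite !mxE; case: unliftP => [a ->|->]; rewrite ?mxE.
  apply/existsP/idP => [[j' /andP [/eqP [E] H]]|H].
    by rewrite -(val_inj E).
  by exists a; rewrite eqxx.
by apply/existsP => [[j' /andP [/eqP E _]]].
Qed.

Lemma exists_occurs_row_col k m (t : 'S_k) (s : 'S_m) v :
  (exists f g, occurs (pmx t) (pmx s) f g /\ forall i, f i != v) <->
  (exists f g, occurs (pmx t) (pmx s) f g /\ forall j, g j != (s^-1)%g v).
Proof.
by split=> -[f [g [occ /(occurs_pmx_avoid _ occ) avoid]]]; exists f, g.
Qed.

Definition pivot sd m (s : 'S_m.+1) : 'I_m.+1 :=
  match sd with
  | Top => (s^-1)%g ord_max
  | Bottom => (s^-1)%g ord0
  | Right => ord_max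
  | Left => ord0
  end.

Lemma contains_ext_pattern sd k (t : 'S_k) m (s : 'S_m.+1) :
  contains_ext sd t s <-> pattern t (perm_delete s (pivot sd s)).
Proof.
rewrite pattern_delete; case: sd => /=.
- by rewrite Mtop_insrow submx_insrow_extreme exists_occurs_row_col.
- by rewrite Mbottom_insrow submx_insrow_extreme exists_occurs_row_col.
- by rewrite Mright_insrow submx_inscol_extreme.
- by rewrite Mleft_insrow submx_inscol_extreme.
Qed.

Lemma Av_ext_delete (C : forall n, 'S_n -> Prop) (HC : perm_class C)
    sd m (s : 'S_m.+1) :
  Av_ext C sd s <-> C m (perm_delete s (pivot sd s)).
Proof.
rewrite (mem_class_pbasis HC).
by split=> avoid k t /avoid; rewrite contains_ext_pattern.
Qed.

(* The coordinate of the pivot that the side leaves free; together with the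
   permutation left after deleting the pivot it determines [s]. *)
Definition pivot_label sd m (s : 'S_m.+1) : 'I_m.+1 :=
  match sd with
  | Top | Bottom => pivot sd s
  | Right | Left => s (pivot sd s)
  end.

Lemma pivot_label_eq sd m (s1 s2 : 'S_m.+1) :
  pivot_label sd s1 = pivot_label sd s2 ->
  pivot sd s1 = pivot sd s2 /\ s1 (pivot sd s1) = s2 (pivot sd s2).
Proof. by case: sd => /= E; split; rewrite ?permKV. Qed.

Definition pivot_split sd m (s : 'S_m.+1) : 'I_m.+1 * 'S_m :=
  (pivot_label sd s, perm_delete s (pivot sd s)).

Lemma pivot_split_bij sd m : bijective (@pivot_split sd m).
Proof.
apply: inj_card_bij; last by rewrite card_prod !card_Sn card_ord factS.
move=> s1 s2 [/pivot_label_eq [Ep Es] Ed].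
by rewrite -(perm_deleteK s1 (pivot sd s1)) Es Ed Ep perm_deleteK.
Qed.

Lemma card_preim_snd (T U V : finType) (h : T -> U * V) (P : pred V) :
  bijective h -> #|[set x | P (h x).2]| = #|U| * #|[set y | P y]|.
Proof.
case=> h' hK h'K; rewrite -(card_imset _ (can_inj hK)) -cardsT -cardsX.
apply: eq_card => -[u v]; rewrite !inE /=.
apply/imsetP/idP => [[x]|Pv]; first by rewrite inE => Px /(congr1 snd) /= ->.
by exists (h' (u, v)); rewrite ?inE h'K.
Qed.

Theorem corollary2 (C : forall n, 'S_n -> Prop) (HC : perm_class C)
    (sd : side) (n : nat) :
  n > 0 ->
  num_of_size (Av_ext C sd) n = n * num_of_size C n.-1.
Proof.
case: n => // m _; rewrite /num_of_size /=.
have := card_preim_snd (fun u => `[< C m u >]) (pivot_split_bij sd m).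
rewrite card_ord => <-; apply: eq_card => s; rewrite !inE.
exact: asbool_equiv_eq (Av_ext_delete HC sd s).
Qed.
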